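(* For every $n\ge 0$ and every monotone language $L\subseteq\{0,1\}^n$, the minimal PDFA recognizing $L$ has at most \[ \sum_{i=0}^n \min\bigl(2^i,\ |F_{n-i}|-1\bigr) \] states. Moreover, for each $n\le 10$ there is a monotone language $L\subseteq\{0,1\}^n$ whose minimal PDFA has exactly this many states.
   Context: A PDFA is a deterministic finite automaton whose transition function may be partial; the minimal PDFA of $L$ is one recognizing $L$ with the least number of states. A language $L\subseteq\{0,1\}^n$ is monotone if whenever $s\in L$ and $t\in\{0,1\}^n$ pointwise dominates $s$ (i.e., $s(j)\le t(j)$ for all $j$), then $t\in L$. $F_k$ denotes the set of monotone Boolean functions of $k$ variables (including the constants $0$ and $1$); $|F_k|$ is the $k$th Dedekind number. *)

From mathcomp Require Import all_boot.
Set Implicit Arguments. Unset Strict Implicit. Unset Printing Implicit Defensive.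

(* A PDFA over the alphabet {0,1} (encoded as bool: false = 0, true = 1)
   with k states 'I_k, a start state, a PARTIAL transition function
   and a set of accepting states. *)
Record pdfa (k : nat) := Pdfa {
  pdfa_start : 'I_k;
  pdfa_trans : 'I_k -> bool -> option 'I_k;
  pdfa_final : {set 'I_k}
}.

Fixpoint pdfa_run k (A : pdfa k) (q : 'I_k) (w : seq bool) : option 'I_k :=
  match w with
  | [::] => Some q
  | a :: w' => if pdfa_trans A q a is Some q' then pdfa_run A q' w' else None
  end.

Definition pdfa_accepts k (A : pdfa k) (w : seq bool) : bool :=
  if pdfa_run A (pdfa_start A) w is Some q then q \in pdfa_final A else false.

Definition recognizes n k (A : pdfa k) (L : {set n.-tuple bool}) : Prop :=
  forall w : seq bool, pdfa_accepts A w <-> exists2 t : n.-tuple bool, t \in L & tval t = w.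

Definition monotone_lang n (L : {set n.-tuple bool}) : Prop :=
  forall s t : n.-tuple bool, s \in L ->
    (forall j : 'I_n, tnth s j <= tnth t j) -> t \in L.

(* |F_k| : number of monotone Boolean functions of k variables (constants included) *)
Definition dedekind (k : nat) : nat :=
  #|[set f : {ffun {ffun 'I_k -> bool} -> bool} |
      [forall x : {ffun 'I_k -> bool}, forall y : {ffun 'I_k -> bool}, [forall i : 'I_k, x i <= y i] ==> (f x <= f y)]]|.

Definition mono_bound (n : nat) : nat :=
  \sum_(i < n.+1) minn (2 ^ i) (dedekind (n - i) - 1).

From mathcomp Require Import all_boot zify.
Set Implicit Arguments. Unset Strict Implicit. Unset Printing Implicit Defensive.

(* For a
   prefix u, the residual table of u lists, for every suffix w of length
   n - |u| (in the order of [words]), whether u ++ w is in the language; equal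
   tables mean equal residual languages.  The distinct live tables are the
   states of a Myhill-Nerode PDFA (reading a letter keeps one half of the
   table), and every PDFA for the language has at least that many states.

   Upper bound: the live tables of prefixes of length i are at most 2^i in
   number, and for a monotone language they are distinct monotone Boolean
   functions of the remaining n - i letters other than the constant 0, hence
   at most |F_(n-i)| - 1.  Summing over the levels i gives [mono_bound n].

   Sharpness for n <= 10: |F_m| is computed for m <= 4 by counting monotone
   truth tables, which evaluates [mono_bound n]; for each n an explicit
   upset (given by its minimal words) is checked by computation to have
   exactly that many live residual tables. *)

(* All words of length m, those starting with 0 (= false) first. *)
Fixpoint words (m : nat) : seq (seq bool) :=
  if m is m'.+1 then [seq false :: w | w <- words m'] ++ [seq true :: w | w <- words m']
  else [:: [::]].

Lemma mem_map_cons (c b : bool) (w : seq bool) (W : seq (seq bool)) :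
  (b :: w \in [seq c :: v | v <- W]) = (b == c) && (w \in W).
Proof. by apply/mapP/andP => [[v vW [-> ->]]|[/eqP -> wW]]; last exists w. Qed.

Lemma mem_words m w : (w \in words m) = (size w == m).
Proof.
elim: m w => [|m IH] [|b w] //=; rewrite mem_cat ?mem_map_cons ?IH ?eqSS.
- by apply/negbTE; rewrite negb_or; apply/andP; split; apply/mapP => -[].
- by case: b; rewrite /= ?orbF.
Qed.

Lemma size_words m : size (words m) = 2 ^ m.
Proof. by elim: m => //= m IH; rewrite size_cat !size_map IH expnS mul2n addnn. Qed.

Lemma uniq_words m : uniq (words m).
Proof.
have cons_inj (c : bool) : injective (cons c) by move=> v w [].
elim: m => //= m IH; rewrite cat_uniq !(map_inj_uniq (cons_inj _)) IH andbT /=.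
by apply/hasPn => _ /mapP [w _ ->]; apply/negP => /mapP [v _ []].
Qed.

Definition leW (s t : seq bool) : bool := all2 (fun a b : bool => a <= b) s t.

Lemma leW_refl s : leW s s.
Proof. by elim: s => //= a s ->; rewrite leqnn. Qed.

Lemma leW_size s t : leW s t -> size s = size t.
Proof. by elim: s t => [|a s IH] [|b t] //= /andP [_ /IH ->]. Qed.

Lemma leW_trans s t u : leW s t -> leW t u -> leW s u.
Proof.
elim: s t u => [|a s IH] [|b t] [|c u] //= /andP [ab st] /andP [bc tu].
by rewrite (leq_trans ab bc) (IH _ _ st tu).
Qed.

Lemma leW_cat s1 s2 t1 t2 :
  size s1 = size t1 -> leW (s1 ++ s2) (t1 ++ t2) = leW s1 t1 && leW s2 t2.
Proof. by elim: s1 t1 => [|a s IH] [|b t] //= [/IH ->]; rewrite andbA. Qed.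

Lemma leW_nthP s t :
  size s = size t -> reflect (forall j, nth false s j <= nth false t j) (leW s t).
Proof.
elim: s t => [|a s IH] [|b t] //= e; first by constructor.
move: e => [e].
apply: (iffP andP) => [[ab /(IH _ e) st] [|j] //=|le].
by split; [exact: (le 0) | apply/(IH _ e) => j; exact: (le j.+1)].
Qed.

Lemma leW_tupleP n (s t : n.-tuple bool) :
  reflect (forall j : 'I_n, tnth s j <= tnth t j) (leW s t).
Proof.
have e : size s = size t by rewrite !size_tuple.
apply: (iffP (leW_nthP e)) => le j.
  by rewrite !(tnth_nth false).
case: (ltnP j n) => [jn|nj]; first by have := le (Ordinal jn); rewrite !(tnth_nth false).
by rewrite nth_default ?size_tuple.
Qed.

(* Membership in L of an arbitrary word (false unless its length is n). *)
Definition memb n (L : {set n.-tuple bool}) (w : seq bool) : bool :=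
  if insub w is Some t then (t : n.-tuple bool) \in L else false.

Lemma membP n (L : {set n.-tuple bool}) w :
  (exists2 t : n.-tuple bool, t \in L & tval t = w) <-> memb L w.
Proof.
rewrite /memb; case: insubP => [t _ <-|w_n].
  by split => [[t' t'L /val_inj <-]|tL] //; exists t.
by split => // -[t _ tw]; case/negP: w_n; rewrite -tw size_tuple.
Qed.

Lemma recognizesE n k (A : pdfa k) (L : {set n.-tuple bool}) :
  recognizes A L <-> pdfa_accepts A =1 memb L.
Proof.
split => [rec w|acc w]; last by rewrite acc; split => /membP.
by apply/idP/idP => [/rec/membP|/membP/rec].
Qed.

Definition upward_closed (P : pred (seq bool)) : Prop :=
  forall s t, leW s t -> P s -> P t.

Lemma monotone_upward n (L : {set n.-tuple bool}) :
  monotone_lang L -> upward_closed (memb L).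
Proof.
move=> monL s t st; rewrite {1}/memb; case: insubP => // s' _ s's s'L.
have t_n : size t == n by rewrite -(leW_size st) -s's size_tuple.
rewrite /memb insubT; apply: monL s'L _; apply/leW_tupleP; by rewrite s's.
Qed.

Lemma pdfa_run_cat k (A : pdfa k) q u w :
  pdfa_run A q (u ++ w) = obind (pdfa_run A ^~ w) (pdfa_run A q u).
Proof. by elim: u q => //= a u IH q; case: (pdfa_trans A q a). Qed.

Lemma size_undup_map_le (T U V : eqType) (f : T -> U) (g : T -> V) (s : seq T) :
  {in s &, forall x y, g x = g y -> f x = f y} ->
  size (undup (map f s)) <= size (undup (map g s)).
Proof.
elim: s => //= x s IH fg.
have fg_s : {in s &, forall x y, g x = g y -> f x = f y}.
  by move=> y z ys zs; apply: fg; rewrite inE ?ys ?zs orbT.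
case: ifP => [_|/negbT fx_s]; first by apply: leq_trans (IH fg_s) _; case: ifP.
suff -> : g x \in map g s = false by apply: IH.
apply/negbTE; apply: contra fx_s => /mapP [y ys gxy].
by apply/mapP; exists y => //; apply: fg; rewrite ?inE ?eqxx ?ys ?orbT.
Qed.

Lemma size_partition (T : eqType) m (P : nat -> pred T) (s : seq T) :
  {in s, forall x, \sum_(i < m) P i x = 1} -> size s = \sum_(i < m) count (P i) s.
Proof.
elim: s => [|x s IH] P1 /=; first by rewrite big1.
rewrite big_split /= (P1 x (mem_head x s)) IH // => y ys.
by apply: P1; rewrite inE ys orbT.
Qed.

Definition word_of m (x : {ffun 'I_m -> bool}) : seq bool := [seq x i | i <- enum 'I_m].
Definition ffun_of_word m (w : seq bool) : {ffun 'I_m -> bool} := [ffun i : 'I_m => nth false w i].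

Lemma size_word_of m (x : {ffun 'I_m -> bool}) : size (word_of x) = m.
Proof. by rewrite size_map size_enum_ord. Qed.

Lemma nth_word_of m (x : {ffun 'I_m -> bool}) (i : 'I_m) : nth false (word_of x) i = x i.
Proof. by rewrite (nth_map i) ?size_enum_ord // nth_ord_enum. Qed.

Lemma word_ofK m w : size w = m -> word_of (ffun_of_word m w) = w.
Proof.
move=> w_m; apply: (@eq_from_nth _ false); rewrite size_word_of // => j j_m.
by rewrite (nth_word_of _ (Ordinal j_m)) ffunE.
Qed.

Lemma ffun_of_wordK m (x : {ffun 'I_m -> bool}) : ffun_of_word m (word_of x) = x.
Proof. by apply/ffunP => i; rewrite ffunE nth_word_of. Qed.

Lemma leW_word_of m (x y : {ffun 'I_m -> bool}) :
  leW (word_of x) (word_of y) = [forall i, x i <= y i].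
Proof.
have e : size (word_of x) = size (word_of y) by rewrite !size_word_of.
apply/(leW_nthP e)/forallP => [le i|le j]; first by rewrite -!nth_word_of.
case: (ltnP j m) => [j_m|m_j]; first by rewrite !(nth_word_of _ (Ordinal j_m)).
by rewrite nth_default ?size_word_of.
Qed.

Definition monotone_functions m : {set {ffun {ffun 'I_m -> bool} -> bool}} :=
  [set f : {ffun {ffun 'I_m -> bool} -> bool} |
      [forall x : {ffun 'I_m -> bool}, forall y : {ffun 'I_m -> bool},
         [forall i : 'I_m, x i <= y i] ==> (f x <= f y)]].

Lemma dedekindE m : dedekind m = #|monotone_functions m|.
Proof. by []. Qed.

Lemma monotone_functionsP m (f : {ffun {ffun 'I_m -> bool} -> bool}) :
  reflect (forall v w, size v = m -> size w = m -> leW v w ->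
             f (ffun_of_word m v) <= f (ffun_of_word m w))
          (f \in monotone_functions m).
Proof.
rewrite inE; apply: (iffP forallP) => [mon v w v_m w_m vw|mon x].
  have /forallP/(_ (ffun_of_word m w))/implyP := mon (ffun_of_word m v); apply.
  by rewrite -leW_word_of !word_ofK.
apply/forallP => y; apply/implyP; rewrite -leW_word_of => xy.
by have := mon _ _ (size_word_of x) (size_word_of y) xy; rewrite !ffun_of_wordK.
Qed.

Section Residuals.
Variables (n : nat) (mb : pred (seq bool)).
Hypothesis mb_size : forall w, mb w -> size w = n.

(* The residual of [u] tabulated on all suffixes of the only length that can
   lead to acceptance; it determines the residual language of [u]. *)
Definition residual (u : seq bool) : seq bool :=
  [seq mb (u ++ w) | w <- words (n - size u)].

Definition live (u : seq bool) : bool := true \in residual u.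

Lemma size_residual u : size (residual u) = 2 ^ (n - size u).
Proof. by rewrite size_map size_words. Qed.

Lemma mb_cat_size u w : mb (u ++ w) -> size w = n - size u.
Proof. by move/mb_size; rewrite size_cat => <-; rewrite addKn. Qed.

Lemma nth_residual u w :
  size w = n - size u -> nth false (residual u) (index w (words (n - size u))) = mb (u ++ w).
Proof.
move=> w_size; have w_in : w \in words (n - size u) by rewrite mem_words w_size.
by rewrite (nth_map [::]) ?index_mem // nth_index.
Qed.

Lemma liveP u : reflect (exists w, mb (u ++ w)) (live u).
Proof.
apply: (iffP mapP) => [[w _ /esym uw]|[w uw]]; first by exists w.
by exists w; rewrite ?mem_words ?(mb_cat_size uw).
Qed.

Lemma live_size u : live u -> size u <= n.
Proof. by case/liveP => w /mb_size; rewrite size_cat => <-; apply: leq_addr. Qed.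

Lemma live_prefix u w : live (u ++ w) -> live u.
Proof. by case/liveP => x; rewrite -catA => uwx; apply/liveP; exists (w ++ x). Qed.

Lemma residual_sem u v : residual u = residual v -> forall w, mb (u ++ w) = mb (v ++ w).
Proof.
move=> ruv; have /eqP : size (residual u) = size (residual v) by rewrite ruv.
rewrite !size_residual eqn_exp2l // => /eqP nuv w.
have [w_size|w_size] := eqVneq (size w) (n - size u).
  by rewrite -nth_residual // ruv nuv nth_residual // -nuv.
have dead x : n - size x = n - size u -> mb (x ++ w) = false.
  by move=> nxu; apply/negbTE/negP => /mb_cat_size; rewrite nxu => /eqP; apply/negP.
by rewrite !dead.
Qed.

Lemma residual_eq u v :
  live u -> (forall w, mb (u ++ w) = mb (v ++ w)) -> residual u = residual v.
Proof.
case/liveP=> w0 uw0 uv; have vw0 : mb (v ++ w0) by rewrite -uv.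
have nuv : n - size u = n - size v by rewrite -(mb_cat_size uw0) (mb_cat_size vw0).
by rewrite /residual nuv; apply: eq_map => w; rewrite uv.
Qed.

(* Reading a letter keeps the corresponding half of the residual table. *)
Definition step (r : seq bool) (a : bool) : seq bool :=
  (if a then drop else take) (size r)./2 r.

Lemma residual_rcons u a : size u < n -> residual (rcons u a) = step (residual u) a.
Proof.
move=> u_n; set m := n - (size u).+1.
have nu : n - size u = m.+1 by rewrite /m; lia.
have half : (size (residual u))./2 = size [seq mb (u ++ false :: w) | w <- words m].
  by rewrite size_residual nu size_map size_words expnS mul2n doubleK.
rewrite /step half /residual nu size_rcons -/m /= map_cat -!map_comp.
by case: a; rewrite ?take_size_cat ?drop_size_cat ?size_map //;
  apply: eq_map => w; rewrite /= cat_rcons.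
Qed.

(* Only the residual of a word of length [n] can be the table [:: true]. *)
Lemma residual_accept u : (residual u == [:: true]) = mb u.
Proof.
case: (ltnP (size u) n) => [u_n|n_u].
  have big : 1 < size (residual u).
    by rewrite size_residual -{1}(expn0 2) ltn_exp2l // subn_gt0.
  have -> : residual u == [:: true] = false by apply/negbTE; apply: contraTneq big => ->.
  by apply/esym/negbTE/negP => /mb_size; lia.
rewrite /residual (_ : n - size u = 0) /=; last by apply/eqP; rewrite subn_eq0.
by rewrite cats0; case: (mb u).
Qed.

Definition short_words : seq (seq bool) := flatten [seq words i | i <- iota 0 n.+1].

Lemma mem_short_words w : (w \in short_words) = (size w <= n).
Proof.
apply/flattenP/idP => [[W /mapP [i]]|w_n].
  by rewrite mem_iota ltnS => /andP [_ i_n] -> /[!mem_words] /eqP ->.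
by exists (words (size w)); rewrite ?mem_words //; apply: map_f; rewrite mem_iota ltnS w_n.
Qed.

(* The distinct live residual tables: the states of the minimal PDFA. *)
Definition states : seq (seq bool) := undup [seq residual u | u <- short_words & live u].

Lemma statesP r : reflect (exists2 u, live u & residual u = r) (r \in states).
Proof.
rewrite mem_undup; apply: (iffP mapP) => [[u]|[u u_live <-]].
  by rewrite mem_filter => /andP [u_live _] ->; exists u.
by exists u; rewrite // mem_filter u_live mem_short_words live_size.
Qed.

Lemma live_states r : r \in states -> true \in r.
Proof. by case/statesP => u u_live <-. Qed.

Definition state (r : seq bool) : option 'I_(size states) := insub (index r states).

Lemma stateP r q : state r = Some q -> r \in states /\ nth [::] states q = r.
Proof.
rewrite /state; case: insubP => // i; rewrite index_mem => r_in i_val [<-].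
by rewrite i_val nth_index.
Qed.

Lemma state_dead u : ~~ live u -> state (residual u) = None.
Proof.
move=> u_dead; rewrite /state insubF // index_mem.
by apply/negbTE; apply: contra u_dead => /live_states.
Qed.

Section MinimalAutomaton.
Hypothesis nil_live : live [::].

Lemma start_index : index (residual [::]) states < size states.
Proof. by rewrite index_mem; apply/statesP; exists [::]. Qed.

(* The Myhill-Nerode automaton: a state is a live residual table, reading a
   letter halves it, and the accepting state is the table [:: true]. *)
Definition residual_pdfa : pdfa (size states) :=
  Pdfa (Ordinal start_index)
    (fun (q : 'I_(size states)) a =>
       let r := nth [::] states q in if 1 < size r then state (step r a) else None)
    [set q : 'I_(size states) | nth [::] states q == [:: true]].

Lemma state_start : state (residual [::]) = Some (Ordinal start_index).
Proof.
rewrite /state; case: insubP => [i _ i_val|]; last by rewrite start_index.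
by congr Some; apply: val_inj.
Qed.

Lemma run_residual_pdfa w u q :
  state (residual u) = Some q -> pdfa_run residual_pdfa q w = state (residual (u ++ w)).
Proof.
elim: w u q => [|a w IH] u q uq /=; first by rewrite cats0.
have [_ ->] := stateP uq; rewrite size_residual -{1}(expn0 2) ltn_exp2l // subn_gt0.
case: ltnP => [u_n|n_u]; last first.
  by rewrite state_dead //; apply: contraTN n_u => /live_size; rewrite size_cat /= -ltnNge; lia.
rewrite -residual_rcons //; case uaq: (state _) => [q'|]; first by rewrite (IH _ _ uaq) cat_rcons.
have ua_dead : ~~ live (rcons u a).
  apply/negP => ua_live; move: uaq; rewrite /state insubT // index_mem.
  by apply/statesP; exists (rcons u a).
by rewrite state_dead //; apply: contra ua_dead; rewrite -cat_rcons; apply: live_prefix.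
Qed.

Lemma residual_pdfa_accepts : pdfa_accepts residual_pdfa =1 mb.
Proof.
move=> w; rewrite /pdfa_accepts (run_residual_pdfa w state_start) cat0s. case wq: (state _) => [q|].
  by rewrite inE; have [_ ->] := stateP wq; apply: residual_accept.
apply/esym/negbTE/negP => w_in; move: wq; rewrite /state insubT // index_mem.
by apply/statesP; exists w => //; apply/liveP; exists [::]; rewrite cats0.
Qed.
End MinimalAutomaton.

(* Any PDFA for the language has at least as many states as there are live
   residual tables: words reaching the same state have the same residual. *)
Lemma states_le k (A : pdfa k) : pdfa_accepts A =1 mb -> size states <= k.
Proof.
move=> accA; pose run u := pdfa_run A (pdfa_start A) u.
have mb_run u w :
    mb (u ++ w) = if obind (pdfa_run A ^~ w) (run u) is Some q then q \in pdfa_final A else false.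
  by rewrite -accA /pdfa_accepts pdfa_run_cat.
apply: (leq_trans (size_undup_map_le (g := run) _)).
  move=> u v; rewrite mem_filter => /andP [u_live _] _ ruv.
  by apply: residual_eq => // w; rewrite !mb_run ruv.
apply: (@leq_trans (size [seq Some q | q <- enum 'I_k])); last by rewrite size_map size_enum_ord.
apply: uniq_leq_size (undup_uniq _) _ => o /[!mem_undup] /mapP [u].
rewrite mem_filter => /andP [/liveP [w uw] _] ->.
move: uw; rewrite mb_run; case: (run u) => [q _|//].
by apply: map_f; rewrite mem_enum.
Qed.

Definition level_residuals i : seq (seq bool) := undup [seq residual u | u <- words i & live u].

Lemma size_level_residuals i : size (level_residuals i) <= 2 ^ i.
Proof.
rewrite -size_words; apply: leq_trans (size_undup _) _.
by rewrite size_map size_filter count_size.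
Qed.

Lemma count_level i : i <= n ->
  count (fun r => size r == 2 ^ (n - i)) states <= size (level_residuals i).
Proof.
move=> i_n; rewrite -size_filter; apply: uniq_leq_size; first by rewrite filter_uniq ?undup_uniq.
move=> r; rewrite mem_filter => /andP [r_lvl /statesP [u u_live ur]].
move: r_lvl; rewrite -ur size_residual eqn_exp2l // => /eqP u_i.
have {}u_i : size u = i by move: (live_size u_live) u_i; lia.
rewrite mem_undup; apply: map_f.
by rewrite mem_filter u_live mem_words u_i eqxx.
Qed.

Lemma size_states_levels :
  size states = \sum_(i < n.+1) count (fun r => size r == 2 ^ (n - i)) states.
Proof.
apply: (size_partition (P := fun i (r : seq bool) => size r == 2 ^ (n - i))).
move=> _ /statesP [u /live_size u_n <-].
have u_lt : size u < n.+1 by [].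
rewrite (bigD1 (Ordinal u_lt)) //= [size _]size_residual eqxx big1 // => i ne.
rewrite eqn_exp2l //; case: eqP => // e; case/eqP: ne; apply: val_inj => /=.
by move: e (ltn_ord i); lia.
Qed.

Hypothesis mb_up : upward_closed mb.

(* Distinct live residuals at level i give distinct nonzero monotone functions
   of the remaining n - i letters. *)
Lemma level_residuals_dedekind i : i <= n -> size (level_residuals i) <= dedekind (n - i) - 1.
Proof.
move=> i_n; set m := n - i.
pose fun_of u : {ffun {ffun 'I_m -> bool} -> bool} := [ffun x => mb (u ++ word_of x)].
pose zero : {ffun {ffun 'I_m -> bool} -> bool} := [ffun _ => false].
apply: (leq_trans (size_undup_map_le (g := fun_of) _)).
  move=> u v; rewrite !mem_filter !mem_words => /andP [_ /eqP u_i] /andP [_ /eqP v_i] fuv.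
  rewrite /residual u_i v_i -/m; apply/eq_in_map => w; rewrite mem_words => /eqP w_m.
  by move/ffunP/(_ (ffun_of_word m w)): fuv; rewrite !ffunE word_ofK.
have zero_mon : zero \in monotone_functions m.
  by rewrite inE; apply/forallP => x; apply/forallP => y; rewrite !ffunE implybT.
rewrite dedekindE (cardsD1 zero) zero_mon add1n subn1 /= cardE.
apply: uniq_leq_size (undup_uniq _) _ => f /[!mem_undup] /mapP [u].
rewrite mem_filter mem_words => /andP [/liveP [w uw] /eqP u_i] ->.
rewrite mem_enum in_setD1 inE; apply/andP; split.
  apply/eqP => /ffunP /(_ (ffun_of_word m w)); rewrite !ffunE word_ofK ?uw //.
  by rewrite (mb_cat_size uw) u_i.
apply/forallP => x; apply/forallP => y; apply/implyP; rewrite -leW_word_of => xy.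
rewrite !ffunE; case ux: (mb _) => //=.
by rewrite (mb_up _ ux) // leW_cat // leW_refl.
Qed.

Lemma size_states_bound : size states <= mono_bound n.
Proof.
rewrite size_states_levels /mono_bound; apply: leq_sum => i _.
have i_n : i <= n by rewrite -ltnS.
rewrite leq_min !(leq_trans (count_level i_n)) ?size_level_residuals //.
exact: level_residuals_dedekind.
Qed.
End Residuals.

Section TruthTables.
Variable k : nat.

Definition truth_table (f : {ffun {ffun 'I_k -> bool} -> bool}) : seq bool :=
  [seq f (ffun_of_word k w) | w <- words k].

(* The positions in a truth table of the comparable pairs of points. *)
Definition order_pairs : seq (nat * nat) :=
  [seq (index vw.1 (words k), index vw.2 (words k))
     | vw <- [seq (v, w) | v <- words k, w <- words k] & leW vw.1 vw.2].

(* A table respects the order pairs iff it is the table of a monotone function. *)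
Definition respects (pairs : seq (nat * nat)) (c : seq bool) : bool :=
  all (fun ij => nth false c ij.1 <= nth false c ij.2) pairs.

Lemma nth_truth_table f v :
  size v = k -> nth false (truth_table f) (index v (words k)) = f (ffun_of_word k v).
Proof.
move=> v_k; have v_in : v \in words k by rewrite mem_words v_k.
by rewrite (nth_map [::]) ?index_mem ?nth_index.
Qed.

Lemma truth_table_monotone f : (f \in monotone_functions k) = respects order_pairs (truth_table f).
Proof.
apply/monotone_functionsP/allP => [mon ij /mapP [[v w]] | resp v w v_k w_k vw].
  rewrite mem_filter /= => /andP [vw /allpairsP [[v' w'] /= [v_in w_in [ev ew]]]] ->.
  subst v' w'; move: v_in w_in; rewrite !mem_words => /eqP v_k /eqP w_k.
  by rewrite /= !nth_truth_table ?mon.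
rewrite -!nth_truth_table //; apply: (resp (_, _)); apply/mapP; exists (v, w) => //.
by rewrite mem_filter vw; apply: allpairs_f; rewrite mem_words ?v_k ?w_k.
Qed.

Lemma truth_table_inj : injective truth_table.
Proof.
move=> f g fg; apply/ffunP => x.
by rewrite -[x]ffun_of_wordK -!nth_truth_table ?size_word_of ?fg.
Qed.

Lemma truth_table_onto c : size c = 2 ^ k ->
  truth_table [ffun x => nth false c (index (word_of x) (words k))] = c.
Proof.
move=> c_size; apply: (@eq_from_nth _ false); first by rewrite size_map size_words.
move=> j; rewrite size_map size_words => j_lt.
have w_in : nth [::] (words k) j \in words k by rewrite mem_nth ?size_words.
rewrite (nth_map [::]) ?size_words // ffunE word_ofK ?index_uniq ?uniq_words ?size_words //.
by apply/eqP; rewrite -mem_words.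
Qed.

Lemma dedekind_count : dedekind k = count (respects order_pairs) (words (2 ^ k)).
Proof.
rewrite dedekindE cardE -(size_map truth_table) -size_filter; apply: perm_size.
apply: uniq_perm; rewrite ?filter_uniq ?uniq_words ?(map_inj_uniq truth_table_inj) ?enum_uniq //.
move=> c; rewrite mem_filter mem_words; apply/mapP/andP => [[f]|[resp /eqP c_size]].
  by rewrite mem_enum truth_table_monotone => resp ->; rewrite resp size_map size_words.
exists [ffun x => nth false c (index (word_of x) (words k))]; last by rewrite truth_table_onto.
by rewrite mem_enum truth_table_monotone truth_table_onto.
Qed.
End TruthTables.

(* A monotone function of k variables is one of k + 1 variables ignoring the last. *)
Lemma dedekind_succ k : dedekind k <= dedekind k.+1.
Proof.
pose restr (x : {ffun 'I_k.+1 -> bool}) : {ffun 'I_k -> bool} := [ffun i => x (lift ord_max i)].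
pose ext (f : {ffun {ffun 'I_k -> bool} -> bool}) := [ffun x => f (restr x)].
have ext_inj : injective ext.
  move=> f g /ffunP fg; apply/ffunP => y.
  pose x : {ffun 'I_k.+1 -> bool} := [ffun j => if unlift ord_max j is Some i then y i else false].
  have <- : restr x = y by apply/ffunP => i; rewrite !ffunE liftK.
  by have := fg x; rewrite !ffunE.
rewrite !dedekindE -(card_imset _ ext_inj); apply/subset_leq_card/subsetP => h /imsetP [f].
rewrite !inE => /forallP f_mon ->; apply/forallP => x; apply/forallP => y.
apply/implyP => /forallP xy; rewrite !ffunE.
by apply: (implyP (forallP (f_mon (restr x)) (restr y))); apply/forallP => i; rewrite !ffunE.
Qed.

Lemma dedekind_monotone : {homo dedekind : m p / m <= p}.
Proof. exact: (homo_leq leqnn (fun y x z => @leq_trans y x z) dedekind_succ). Qed.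

Lemma dedekind_small m : m <= 4 -> dedekind m = nth 0 [:: 2; 3; 6; 20; 168] m.
Proof. by case: m => [|[|[|[|[|m]]]]] // _; rewrite dedekind_count; vm_compute. Qed.

Lemma dedekind_ge2 m : 2 <= dedekind m.
Proof. by apply: leq_trans (dedekind_monotone (leq0n m)); rewrite dedekind_small. Qed.

Lemma mono_bound_pos n : 0 < mono_bound n.
Proof.
rewrite /mono_bound big_ord_recl ltn_addr // leq_min expn0 subn0 /=.
by rewrite subn_gt0 dedekind_ge2.
Qed.

(* [dedekind_table m] is |F_m| for m <= 3; beyond, |F_4| = 168 is only a lower
   bound, large enough for the term 2^i to be the minimum when n <= 10. *)
Definition dedekind_table (m : nat) : nat := nth 168 [:: 2; 3; 6; 20] m.

Definition bound_table (n : nat) : nat :=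
  sumn [seq minn (2 ^ i) (dedekind_table (n - i) - 1) | i <- iota 0 n.+1].

(* For n <= 10 the exponential term wins whenever n - i >= 4. *)
Lemma mono_bound_small n : n <= 10 -> mono_bound n = bound_table n.
Proof.
move=> n_le; rewrite /mono_bound /bound_table.
rewrite -(big_mkord xpredT (fun i => minn (2 ^ i) (dedekind (n - i) - 1))).
rewrite sumnE big_map /index_iota subn0.
apply: eq_bigr => i _; case: (leqP (n - i) 3) => [small|big].
  by rewrite /dedekind_table dedekind_small ?(leq_trans small); move: (n - i) small => [|[|[|[|]]]].
have pow : 2 ^ i <= 2 ^ 6 by rewrite leq_pexp2l //; lia.
have D : 168 <= dedekind (n - i).
  by apply: leq_trans (dedekind_monotone big); rewrite dedekind_small.
rewrite /dedekind_table nth_default // !(minn_idPl _) //; apply: leq_trans pow _ => //.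
by rewrite leq_subRL ?(leq_trans _ D).
Qed.

Lemma memb_size n (L : {set n.-tuple bool}) w : memb L w -> size w = n.
Proof. by rewrite /memb; case: insubP => // t /eqP. Qed.

Lemma monotone_pdfa_bound n (L : {set n.-tuple bool}) : monotone_lang L ->
  exists2 k : nat, k <= mono_bound n & exists A : pdfa k, recognizes A L.
Proof.
move=> /monotone_upward L_up; have L_size := @memb_size n L.
have [nil_live|nil_dead] := boolP (live n (memb L) [::]).
  exists (size (states n (memb L))); first exact: size_states_bound.
  by exists (residual_pdfa L_size nil_live); apply/recognizesE/residual_pdfa_accepts.
exists 1; first exact: mono_bound_pos.
pose empty_pdfa : pdfa 1 := Pdfa ord0 (fun _ _ => None) set0.
exists empty_pdfa; apply/recognizesE => w.
have -> : pdfa_accepts empty_pdfa w = false by case: w => [|? ?]; rewrite /pdfa_accepts /= ?inE.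
by apply/esym/negbTE/negP => Lw; case/negP: nil_dead; apply/(liveP L_size); exists w.
Qed.

Definition upset n (G : seq (seq bool)) : {set n.-tuple bool} :=
  [set t : n.-tuple bool | has (leW^~ t) G].

(* Its membership predicate on all words, in a form suited to evaluation. *)
Definition generated n (G : seq (seq bool)) (w : seq bool) : bool :=
  (size w == n) && has (leW^~ w) G.

Lemma generated_size n G w : generated n G w -> size w = n.
Proof. by case/andP => /eqP. Qed.

Lemma memb_upset n G : memb (upset n G) =1 generated n G.
Proof.
move=> w; rewrite /memb /generated; case: insubP => [t _ <-|/negbTE -> //].
by rewrite inE size_tuple eqxx.
Qed.

Lemma upset_monotone n G : monotone_lang (upset n G).
Proof.
move=> s t; rewrite !inE => /hasP [g gG gs] /leW_tupleP st.
by apply/hasP; exists g => //; apply: leW_trans gs st.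
Qed.

Lemma upset_extremal n G : size (states n (generated n G)) = mono_bound n ->
  exists L : {set n.-tuple bool}, monotone_lang L /\
    (exists A : pdfa (mono_bound n), recognizes A L) /\
    (forall (k : nat) (A : pdfa k), recognizes A L -> mono_bound n <= k).
Proof.
move=> sizeG; have G_size := @generated_size n G.
have nil_live : live n (generated n G) [::].
  set S := states n (generated n G).
  have /(statesP G_size) [u u_live _] : nth [::] S 0 \in S by rewrite mem_nth // sizeG mono_bound_pos.
  exact: (@live_prefix n (generated n G) G_size [::] u).
exists (upset n G); split; first exact: upset_monotone.
split.
  rewrite -sizeG; exists (residual_pdfa G_size nil_live).
  by apply/recognizesE => w; rewrite memb_upset residual_pdfa_accepts.
move=> k A /recognizesE accA; rewrite -sizeG; apply: (states_le G_size (A := A)) => w.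
by rewrite accA memb_upset.
Qed.

(* The binary expansion of g on n bits, most significant bit first. *)
Fixpoint bits (n g : nat) : seq bool :=
  if n is n'.+1 then rcons (bits n' g./2) (odd g) else [::].

(* For n = 0, ..., 10: the minimal words, in binary, of a monotone language
   of words of length n whose minimal PDFA meets the bound. *)
Definition extremal_codes : seq (seq nat) := [::
  [:: 0];
  [:: 1];
  [:: 1; 2];
  [:: 3; 5; 6];
  [:: 3; 5; 6; 9; 12];
  [:: 7; 11; 13; 14; 22; 25; 28];
  [:: 7; 10; 19; 21; 25; 37; 38; 44; 49];
  [:: 7; 11; 13; 19; 26; 38; 41; 69; 76; 86; 113; 114; 116; 120];
  [:: 15; 30; 43; 53; 71; 74; 85; 101; 108; 116; 120; 135; 141; 142; 147; 150; 156;
      169; 177; 178; 195; 197; 209; 212; 225; 232];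
  [:: 15; 23; 30; 45; 51; 57; 73; 86; 90; 104; 117; 141; 142; 156; 166; 169; 204;
      210; 227; 228; 241; 266; 269; 284; 295; 297; 309; 325; 339; 369; 370; 389; 390;
      402; 409; 418; 420; 433; 472; 496];
  [:: 15; 27; 30; 43; 45; 51; 71; 83; 86; 102; 121; 122; 141; 151; 167; 181; 186;
      206; 217; 218; 220; 229; 233; 241; 248; 270; 279; 313; 341; 357; 403; 406; 425;
      426; 433; 453; 466; 492; 523; 538; 547; 553; 613; 625; 636; 647; 652; 661; 689;
      692; 710; 713; 724; 728; 737; 775; 778; 787; 797; 805; 818; 838; 845; 857; 860;
      865; 866; 916; 929; 952; 964; 1008]].

Definition extremal_generators (n : nat) : seq (seq bool) :=
  map (bits n) (nth [::] extremal_codes n).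

Lemma extremal_sizes :
  all (fun n => size (states n (generated n (extremal_generators n))) == bound_table n) (iota 0 11).
Proof. by vm_compute. Qed.

Theorem mainTheorem4 :
  (forall (n : nat) (L : {set n.-tuple bool}), monotone_lang L ->
     exists2 k : nat, k <= mono_bound n & exists A : pdfa k, recognizes A L)
  /\
  (forall n : nat, n <= 10 ->
     exists L : {set n.-tuple bool}, monotone_lang L /\
       (exists A : pdfa (mono_bound n), recognizes A L) /\
       (forall (k : nat) (A : pdfa k), recognizes A L -> mono_bound n <= k)).
Proof.
split; first exact: monotone_pdfa_bound.
move=> n n_le; apply: (@upset_extremal n (extremal_generators n)).
rewrite mono_bound_small //; apply/eqP; apply: (allP extremal_sizes).
by rewrite mem_iota.
Qed.
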